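(* Let $i,j\in[s]$ (equal or not). Every homomorphism from $F_i^{\bullet\bullet}$ to $F_j^{\bullet\bullet}$ (both viewed as ordinary digraphs), if one exists, is a bijection $V(F_i^{\bullet\bullet})\to V(F_j^{\bullet\bullet})$.
   Context: All digraphs are finite and loopless; a tournament is a digraph in which every pair of distinct vertices is joined by exactly one arc. A homomorphism from a digraph $F$ to a digraph $H$ is a map $\varphi:V(F)\to V(H)$ with $(\varphi(u),\varphi(v))\in E(H)$ whenever $(u,v)\in E(F)$. Construction of $F_i^{\bullet\bullet}$: fix $s\in\mathbb{N}^+$, a positive integer $m$, and a tournament $F_0$ on vertex set $[m]$ satisfying: (I) every vertex has out-degree and in-degree at most $2m/3$; (II) there are no disjoint $A_1,A_2\subseteq[m]$ with $|A_1|=|A_2|=\lceil\sqrt m\,\rceil$ such that $(a_1,a_2)$ is an arc for all $a_1\in A_1,a_2\in A_2$; (III) for every $S\subseteq[m]$ with $|S|\ge 2m/13-\sqrt m$, $F_0[S]$ contains a directed cycle. Let $k_1,\dots,k_s$ be integers in the open interval $(2m/3+2,\,5m/6)$ with $k_i>k_{i+1}+1$ for $1\le i<s$. For $i\in[s]$, $F_i^{\bullet\bullet}$ is the digraph on vertex set $[m]\cup\{z_i,w_i\}$ ($z_i,w_i$ two new vertices, called roots) whose arcs are all arcs of $F_0$, together with the arcs $z_i\to v$ and $v\to w_i$ for every $1\le v\le k_i$, and the arcs $u\to z_i$ and $w_i\to u$ for every $k_i<u\le m$. There is no arc between $z_i$ and $w_i$. *)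

From mathcomp Require Import all_boot.
From Stdlib Require Import Reals.

Set Implicit Arguments.
Unset Strict Implicit.
Unset Printing Implicit Defensive.

(* Vertex [m] = {1,..,m} is encoded by 'I_m : the ordinal v stands for the
   paper's vertex v+1.  The roots are added with a sum type:
   inr true = z_i, inr false = w_i. *)
Definition vtx (m : nat) : finType := ('I_m + bool)%type.
Definition zroot {m} : vtx m := inr true.
Definition wroot {m} : vtx m := inr false.

Definition tournament m (F : rel 'I_m) : Prop :=
  (forall u, ~~ F u u) /\
  (forall u v, u != v -> (F u v || F v u) && ~~ (F u v && F v u)).

(* ceil(sqrt m) : the least c with m <= c^2 (c = m always works). *)
Definition ceil_sqrt (m : nat) : nat := find (fun c => m <= c * c) (iota 0 m.+1).

Definition cond_I m (F : rel 'I_m) : Prop :=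
  forall u : 'I_m, 3 * #|[set v | F u v]| <= 2 * m /\ 3 * #|[set v | F v u]| <= 2 * m.

Definition cond_II m (F : rel 'I_m) : Prop :=
  ~ (exists A1 A2 : {set 'I_m},
       [/\ [disjoint A1 & A2], #|A1| = ceil_sqrt m, #|A2| = ceil_sqrt m &
           forall a1 a2, a1 \in A1 -> a2 \in A2 -> F a1 a2]).

Definition has_dcycle m (F : rel 'I_m) (S : {set 'I_m}) : Prop :=
  exists c : seq 'I_m, [/\ c != [::], uniq c, all (fun x => x \in S) c & cycle F c].

Definition cond_III m (F : rel 'I_m) : Prop :=
  forall S : {set 'I_m},
    (INR #|S| >= 2 * INR m / 13 - sqrt (INR m))%R -> has_dcycle F S.

(* The digraph F_i^{bullet bullet} with parameter k = k_i:
   z -> v and v -> w for v in {1..k}; u -> z and w -> u for k < u <= m. *)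
Definition Fbb m (F : rel 'I_m) (k : nat) : rel (vtx m) :=
  fun x y =>
    match x, y with
    | inl u, inl v => F u v
    | inr true, inl v => (v < k)%N
    | inl v, inr false => (v < k)%N
    | inl u, inr true => (k <= u)%N
    | inr false, inl u => (k <= u)%N
    | _, _ => false
    end.

Definition is_hom (T1 T2 : Type) (E1 : rel T1) (E2 : rel T2) (f : T1 -> T2) : Prop :=
  forall x y, E1 x y -> E2 (f x) (f y).

From mathcomp Require Import all_boot.
From Stdlib Require Import Reals.

Set Implicit Arguments.
Unset Strict Implicit.
Unset Printing Implicit Defensive.

(* A homomorphism into a digraph without loops or 2-cycles cannot identify
   two vertices that are joined by an arc or by a directed path of length 2:
   the image would be a loop or a 2-cycle.  In F_i^{bullet bullet} every pair
   of distinct vertices is adjacent except the two roots, and z_i -> 1 -> w_i,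
   so every homomorphism is injective, hence bijective on the finite vertex
   set. *)

Definition dist_le2 {T : Type} (E : rel T) (x y : T) : Prop :=
  E x y \/ exists v, E x v /\ E v y.

Section HomInjective.

Variables (T1 T2 : eqType) (E1 : rel T1) (E2 : rel T2) (phi : T1 -> T2).
Hypothesis phi_hom : is_hom E1 E2 phi.
Hypothesis E2_asym : forall a b, ~~ (E2 a b && E2 b a).

Lemma hom_neq_dist_le2 x y : dist_le2 E1 x y -> phi x != phi y.
Proof.
apply: contraPneq => phi_xy [/phi_hom | [v [/phi_hom xv /phi_hom vy]]].
- by rewrite phi_xy; apply/negP; rewrite -[E2 _ _]andbb; apply: E2_asym.
- by move: (E2_asym (phi x) (phi v)); rewrite xv phi_xy vy.
Qed.

Lemma hom_injective_dist_le2 :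
  (forall x y, x != y -> dist_le2 E1 x y \/ dist_le2 E1 y x) -> injective phi.
Proof.
move=> near x y phi_xy; apply/eqP/negPn/negP => /near.
by case=> /hom_neq_dist_le2; rewrite phi_xy eqxx.
Qed.

End HomInjective.

Section Fbb.

Variables (m k : nat) (F : rel 'I_m).
Hypothesis F_tour : tournament F.

Lemma Fbb_asym x y : ~~ (Fbb F k x y && Fbb F k y x).
Proof.
case: F_tour => F_irr F_tot.
case: x => [u|[]]; case: y => [v|[]] //=; try by case: ltnP.
have [->|neq_uv] := eqVneq u v; first by rewrite (negbTE (F_irr v)).
by case/andP: (F_tot u v neq_uv).
Qed.

Lemma Fbb_dist_le2 x y : 0 < m -> 0 < k -> x != y ->
  dist_le2 (Fbb F k) x y \/ dist_le2 (Fbb F k) y x.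
Proof.
move=> m_gt0 k_gt0; case: F_tour => _ F_tot.
have root_path : dist_le2 (Fbb F k) zroot wroot.
  by right; exists (inl (Ordinal m_gt0)).
case: x => [u|[]]; case: y => [v|[]] //= neq.
- by case/andP: (F_tot u v neq) => /orP[]; [left | right]; left.
- 1,2,3,5: by rewrite /dist_le2 /=; case: ltnP; first [by left; left | by right; left].
- by left.
- by right.
Qed.

End Fbb.

Theorem claim4p3 (s m : nat) (F0 : rel 'I_m) (k : nat -> nat) :
  0 < s -> 0 < m ->
  tournament F0 -> cond_I F0 -> cond_II F0 -> cond_III F0 ->
  (forall i, 1 <= i <= s -> 2 * m + 6 < 3 * k i /\ 6 * k i < 5 * m) ->
  (forall i, 1 <= i < s -> k i.+1 + 1 < k i) ->
  forall i j, 1 <= i <= s -> 1 <= j <= s ->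
  forall phi : vtx m -> vtx m,
    is_hom (Fbb F0 (k i)) (Fbb F0 (k j)) phi -> bijective phi.
Proof.
move=> _ m_gt0 F0_tour _ _ _ k_range _ i j i_range _ phi phi_hom.
have ki_gt0 : 0 < k i.
  have [k_lb _] := k_range i i_range.
  by rewrite -(ltn_pmul2l (isT : 0 < 3)) (leq_ltn_trans _ k_lb).
apply: injF_bij; apply: (hom_injective_dist_le2 phi_hom).
  exact: Fbb_asym.
by move=> x y; apply: Fbb_dist_le2.
Qed.
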